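(* Let $G$ be a locally compact group acting properly on a space $X$, and let $Y$ be any $G$-space. Let $S$ be a closed small subset of $X$ and let $f:S\to Y$ be a continuous map such that whenever $s\in S$ and $g\in G$ satisfy $gs\in S$, one has $f(gs)=gf(s)$. Then $f$ extends uniquely to a continuous equivariant map $F:G(S)\to Y$ (i.e. $F(gx)=gF(x)$ for all $g\in G$, $x\in G(S)$).
   Context: All spaces are completely regular Hausdorff. A $G$-space is a space $X$ with a continuous action $G\times X\to X$, $(g,x)\mapsto gx$, with $ex=x$ and $(gh)x=g(hx)$. For $S\subset X$, $G(S)=\{gs\mid g\in G,s\in S\}$. For $U,V\subset X$ the transporter is $\langle U,V\rangle=\{g\in G\mid gU\cap V\neq\emptyset\}$; $U$ and $V$ are thin relative to each other if $\langle U,V\rangle$ has compact closure in $G$. A subset $U\subset X$ is small if every point of $X$ has a neighborhood thin relative to $U$. For $G$ locally compact, a $G$-space $X$ is proper (the action is proper) if every point of $X$ has a small neighborhood. *)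

From Stdlib Require Import Reals List.
Open Scope R_scope.

Record Topology (T : Type) := {
  is_open : (T -> Prop) -> Prop;
  open_full : is_open (fun _ => True);
  open_inter : forall U V, is_open U -> is_open V -> is_open (fun x => U x /\ V x);
  open_union : forall F : (T -> Prop) -> Prop,
      (forall U, F U -> is_open U) -> is_open (fun x => exists U, F U /\ U x)
}.
Arguments is_open {T} t U.

Section Topo.
Context {T : Type} (t : Topology T).

Definition is_closed (C : T -> Prop) : Prop := is_open t (fun x => ~ C x).

Definition nbhd (x : T) (N : T -> Prop) : Prop :=
  exists O, is_open t O /\ O x /\ forall y, O y -> N y.

Definition closure (A : T -> Prop) (x : T) : Prop :=
  forall U, is_open t U -> U x -> exists y, U y /\ A y.

Definition compact (K : T -> Prop) : Prop :=
  forall F : (T -> Prop) -> Prop,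
    (forall U, F U -> is_open t U) ->
    (forall x, K x -> exists U, F U /\ U x) ->
    exists l : list (T -> Prop),
      (forall U, In U l -> F U) /\ (forall x, K x -> exists U, In U l /\ U x).

Definition hausdorff : Prop :=
  forall x y, x <> y -> exists U V, is_open t U /\ is_open t V /\ U x /\ V y /\
    forall z, U z -> V z -> False.

Definition continuous_real (h : T -> R) : Prop :=
  forall x eps, eps > 0 -> exists U, is_open t U /\ U x /\
    forall y, U y -> Rabs (h y - h x) < eps.

Definition completely_regular : Prop :=
  forall (C : T -> Prop) (x : T), is_closed C -> ~ C x ->
    exists h : T -> R, continuous_real h /\ h x = 0 /\ forall y, C y -> h y = 1.

Definition locally_compact : Prop :=
  forall x, exists K, nbhd x K /\ compact K.

End Topo.

(** continuity of f on the subset A (i.e. of the restriction of f to A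
    with the subspace topology) *)
Definition continuous_on {T U : Type} (tT : Topology T) (tU : Topology U)
  (A : T -> Prop) (f : T -> U) : Prop :=
  forall x, A x -> forall V, is_open tU V -> V (f x) ->
    exists O, is_open tT O /\ O x /\ forall y, O y -> A y -> V (f y).

Definition continuous {T U : Type} (tT : Topology T) (tU : Topology U)
  (f : T -> U) : Prop := continuous_on tT tU (fun _ => True) f.

(** joint continuity of a two-variable map A x B -> C (product topology) *)
Definition continuous2 {A B C : Type} (tA : Topology A) (tB : Topology B)
  (tC : Topology C) (m : A -> B -> C) : Prop :=
  forall a b W, is_open tC W -> W (m a b) ->
    exists U V, is_open tA U /\ is_open tB V /\ U a /\ V b /\
      forall a' b', U a' -> V b' -> W (m a' b').

(** A standing convention: all spaces are completely regular Hausdorff. *)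
Definition crh {T : Type} (t : Topology T) : Prop :=
  hausdorff t /\ completely_regular t.

Definition is_group {G : Type} (mul : G -> G -> G) (e : G) (inv : G -> G) : Prop :=
  (forall a b c, mul (mul a b) c = mul a (mul b c)) /\
  (forall a, mul e a = a) /\ (forall a, mul a e = a) /\
  (forall a, mul (inv a) a = e) /\ (forall a, mul a (inv a) = e).

Definition topological_group {G : Type} (tG : Topology G)
  (mul : G -> G -> G) (e : G) (inv : G -> G) : Prop :=
  is_group mul e inv /\ continuous2 tG tG tG mul /\ continuous tG tG inv /\ crh tG.

Definition G_space {G X : Type} (tG : Topology G) (mul : G -> G -> G) (e : G)
  (tX : Topology X) (act : G -> X -> X) : Prop :=
  crh tX /\ continuous2 tG tX tX act /\
  (forall x, act e x = x) /\ (forall g h x, act (mul g h) x = act g (act h x)).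

Section Actions.
Context {G X : Type} (tG : Topology G) (act : G -> X -> X).

Definition saturation (S : X -> Prop) (x : X) : Prop :=
  exists g s, S s /\ x = act g s.

Definition transporter (U V : X -> Prop) (g : G) : Prop :=
  exists u, U u /\ V (act g u).

Definition thin (U V : X -> Prop) : Prop :=
  compact tG (closure tG (transporter U V)).

Context (tX : Topology X).

Definition small (U : X -> Prop) : Prop :=
  forall x, exists N, nbhd tX x N /\ thin N U.

Definition proper_action : Prop :=
  forall x, exists N, nbhd tX x N /\ small N.

End Actions.

From Stdlib Require Import Reals List Classical ClassicalEpsilon.

(** Since [S] is small, [x0 ∈ G(S)] has a neighbourhood [N] such that the
    transporter [<N, S>] lies in a compact set [K].  For each [k] in [K],
    continuity of the actions, of inversion and of [f], together with the
    closedness of [S], give a product neighbourhood [W x O] of [(k, x0)] on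
    which [(h, y) |-> h^-1 f(h y)] stays in a given open [V ∋ F(x0)] whenever
    [h y ∈ S].  Finitely many [W] cover [K]; on the intersection of [N] with
    the corresponding [O]'s, every [y = g s] has [g^-1 ∈ <N, S> ⊆ K], so
    [F y = g f(s)] lies in [V].  Equivariance forces [F (g s) = g f(s)], which
    gives existence and uniqueness. *)

Lemma open_nbhd_forall_In {T A : Type} (t : Topology T) (x0 : T)
  (P : A -> (T -> Prop) -> Prop)
  (P_antitone : forall a O O', (forall y, O' y -> O y) -> P a O -> P a O') :
  forall l : list A,
  (forall a, In a l -> exists O, is_open t O /\ O x0 /\ P a O) ->
  exists O, is_open t O /\ O x0 /\ forall a, In a l -> P a O.
Proof.
  induction l as [|a l IH]; intros Hl.
  - exists (fun _ => True). repeat split; [apply open_full | intros a []].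
  - destruct (IH (fun b Hb => Hl b (or_intror Hb))) as [O [HO [HOx HOl]]].
    destruct (Hl a (or_introl eq_refl)) as [Oa [HOa [HOax HOaP]]].
    exists (fun x => O x /\ Oa x). split; [apply open_inter; auto|].
    split; [auto|]. intros b [<-|Hb].
    + eapply P_antitone; [|exact HOaP]. now intros y [_ Hy].
    + eapply P_antitone; [|exact (HOl b Hb)]. now intros y [Hy _].
Qed.

Lemma closure_subset {T : Type} (t : Topology T) (A : T -> Prop) (x : T) :
  A x -> closure t A x.
Proof. intros Hx U _ HU. now exists x. Qed.

Section EquivariantExtension.

Context {G X Y : Type} (mul : G -> G -> G) (e : G) (inv : G -> G).
Context (actX : G -> X -> X) (actY : G -> Y -> Y) (S : X -> Prop) (f : X -> Y).

Hypothesis group : is_group mul e inv.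
Hypothesis actX_unit : forall x, actX e x = x.
Hypothesis actX_mul : forall g h x, actX (mul g h) x = actX g (actX h x).
Hypothesis actY_unit : forall y, actY e y = y.
Hypothesis actY_mul : forall g h y, actY (mul g h) y = actY g (actY h y).
Hypothesis f_equivariant :
  forall s g, S s -> S (actX g s) -> f (actX g s) = actY g (f s).

Lemma inv_involutive (g : G) : inv (inv g) = g.
Proof.
  destruct group as [assoc [mul1g [mulg1 [mulVg _]]]].
  rewrite <- (mulg1 (inv (inv g))), <- (mulVg g), <- assoc, mulVg, mul1g.
  reflexivity.
Qed.

Lemma actX_invK (g : G) (x : X) : actX (inv g) (actX g x) = x.
Proof.
  destruct group as [_ [_ [_ [mulVg _]]]].
  now rewrite <- actX_mul, mulVg, actX_unit.
Qed.

Lemma orbit_value_welldef (g g' : G) (s s' : X) :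
  S s -> S s' -> actX g s = actX g' s' -> actY g (f s) = actY g' (f s').
Proof.
  destruct group as [assoc [mul1g [_ [mulVg mulgV]]]].
  intros Hs Hs' Heq.
  assert (Hs's : actX (mul (inv g') g) s = s').
  { now rewrite actX_mul, Heq, actX_invK. }
  assert (Hf := f_equivariant s (mul (inv g') g) Hs (eq_ind_r S Hs' Hs's)).
  rewrite Hs's in Hf.
  now rewrite Hf, <- actY_mul, <- assoc, mulgV, mul1g.
Qed.

(* Off [G(S)] the value is irrelevant; [f x] only serves as an inhabitant. *)
Definition extension (x : X) : Y :=
  epsilon (inhabits (f x))
    (fun y => exists g s, S s /\ x = actX g s /\ y = actY g (f s)).

Lemma extensionE (g : G) (s : X) :
  S s -> extension (actX g s) = actY g (f s).
Proof.
  intros Hs. unfold extension.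
  match goal with |- epsilon ?i ?P = _ =>
    destruct (epsilon_spec i P) as [g' [s' [Hs' [Heq ->]]]] end.
  - now exists (actY g (f s)), g, s.
  - now apply orbit_value_welldef.
Qed.

Lemma extension_on (s : X) : S s -> extension s = f s.
Proof. intros Hs. rewrite <- (actX_unit s) at 1. now rewrite extensionE. Qed.

Lemma extension_equivariant (g : G) (x : X) :
  saturation actX S x -> extension (actX g x) = actY g (extension x).
Proof.
  intros [h [s [Hs ->]]].
  now rewrite <- actX_mul, !extensionE, actY_mul.
Qed.

Lemma equivariant_extension_orbit (F : X -> Y) :
  (forall s, S s -> F s = f s) ->
  (forall g x, saturation actX S x -> F (actX g x) = actY g (F x)) ->
  forall g s, S s -> F (actX g s) = actY g (f s).
Proof.
  intros HFf HFeq g s Hs. rewrite HFeq, HFf; auto.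
  exists e, s. auto.
Qed.

Context (tG : Topology G) (tX : Topology X) (tY : Topology Y).

Hypothesis inv_continuous : continuous tG tG inv.
Hypothesis actX_continuous : continuous2 tG tX tX actX.
Hypothesis actY_continuous : continuous2 tG tY tY actY.
Hypothesis f_continuous : continuous_on tX tY S f.
Hypothesis S_closed : is_closed tX S.

(* [h^-1 f(h y)] is [F y] when [h y ∈ S]. *)
Definition controlled (V : Y -> Prop) (W : G -> Prop) (O : X -> Prop) : Prop :=
  forall h y, W h -> O y -> S (actX h y) -> V (actY (inv h) (f (actX h y))).

Lemma controlled_locally (V : Y -> Prop) (x0 : X) (k : G) :
  is_open tY V -> V (extension x0) ->
  exists W O, is_open tG W /\ W k /\ is_open tX O /\ O x0 /\ controlled V W O.
Proof.
  intros HV HVx0.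
  destruct (classic (S (actX k x0))) as [Hk|Hk].
  - rewrite <- (actX_invK k x0), extensionE in HVx0 by exact Hk.
    destruct (actY_continuous _ _ _ HV HVx0)
      as [A [B [HA [HB [HAk [HBk HAB]]]]]].
    destruct (inv_continuous k I A HA HAk) as [W1 [HW1 [HW1k HW1A]]].
    destruct (f_continuous _ Hk B HB HBk) as [C [HC [HCk HCB]]].
    destruct (actX_continuous _ _ _ HC HCk)
      as [W2 [O [HW2 [HO [HW2k [HOx HW2O]]]]]].
    exists (fun g => W1 g /\ W2 g), O.
    repeat split; auto; [apply open_inter; auto|].
    intros h y [Hh1 Hh2] Hy HS. apply HAB; [apply HW1A | apply HCB]; auto.
  - destruct (actX_continuous _ _ _ S_closed Hk)
      as [W [O [HW [HO [HWk [HOx HWO]]]]]].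
    exists W, O. repeat split; auto.
    intros h y Hh Hy HS. exfalso. exact (HWO h y Hh Hy HS).
Qed.

Lemma extension_continuous :
  small tG actX tX S -> continuous_on tX tY (saturation actX S) extension.
Proof.
  intros HSsmall x0 _ V HV HVx0.
  destruct (HSsmall x0) as [N [[ON [HON [HONx HONN]]] Hthin]].
  set (Fam := fun W => is_open tG W /\
                exists O, is_open tX O /\ O x0 /\ controlled V W O).
  destruct (Hthin Fam (fun W HW => proj1 HW)) as [l [Hl Hcover]].
  { intros k _. destruct (controlled_locally V x0 k HV HVx0)
      as [W [O [HW [HWk HO]]]].
    exists W. split; [split; [auto | exists O; auto] | auto]. }
  destruct (open_nbhd_forall_In tX x0 (controlled V)) with (l := l)
    as [O [HO [HOx HOl]]].
  { intros W O O' HO'O HWO h y Hh Hy. apply HWO; auto. }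
  { intros W HW. exact (proj2 (Hl W HW)). }
  exists (fun x => O x /\ ON x). split; [apply open_inter; auto|].
  split; [auto|]. intros y [HyO HyN] [g [s [Hs ->]]].
  destruct (Hcover (inv g)) as [W [HWl HWg]].
  { apply closure_subset. exists (actX g s). split; [auto|].
    now rewrite actX_invK. }
  assert (HVy := HOl W HWl (inv g) (actX g s) HWg HyO).
  rewrite actX_invK, inv_involutive in HVy.
  rewrite extensionE; auto.
Qed.

End EquivariantExtension.

Theorem theorem4p1
  (G X Y : Type) (tG : Topology G) (tX : Topology X) (tY : Topology Y)
  (mul : G -> G -> G) (e : G) (inv : G -> G)
  (HG : topological_group tG mul e inv) (HGlc : locally_compact tG)
  (actX : G -> X -> X) (HX : G_space tG mul e tX actX)
  (Hproper : proper_action tG actX tX)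
  (actY : G -> Y -> Y) (HY : G_space tG mul e tY actY)
  (S : X -> Prop) (HSclosed : is_closed tX S) (HSsmall : small tG actX tX S)
  (f : X -> Y) (Hfcont : continuous_on tX tY S f)
  (Hfeq : forall s g, S s -> S (actX g s) -> f (actX g s) = actY g (f s)) :
  exists F : X -> Y,
    continuous_on tX tY (saturation actX S) F /\
    (forall s, S s -> F s = f s) /\
    (forall g x, saturation actX S x -> F (actX g x) = actY g (F x)) /\
    (forall F' : X -> Y,
       continuous_on tX tY (saturation actX S) F' ->
       (forall s, S s -> F' s = f s) ->
       (forall g x, saturation actX S x -> F' (actX g x) = actY g (F' x)) ->
       forall x, saturation actX S x -> F' x = F x).
Proof.
  destruct HG as [Hgroup [_ [Hinv _]]].
  destruct HX as [_ [HactX [HactX_unit HactX_mul]]].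
  destruct HY as [_ [HactY [HactY_unit HactY_mul]]].
  exists (extension actX actY S f).
  split; [|split; [|split]].
  - eapply extension_continuous; eauto.
  - eapply extension_on; eauto.
  - eapply extension_equivariant; eauto.
  - intros F' _ HF'f HF'eq x [g [s [Hs ->]]].
    erewrite extensionE; eauto.
    eapply equivariant_extension_orbit; eauto.
Qed.
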